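(* Let $R=K[x_1,\ldots,x_n,x_{n+1}]$ over a field $K$, let $I\subset R$ be a monomial ideal with $\gcd(u,x_{n+1})=1$ for all $u\in\mathcal{G}(I)$, and let $\mathfrak{m}=(x_1,\ldots,x_{n+1})$. Let $h=fg$ where $f\neq1$ is a monomial of $R$, $g\in\mathcal{G}(I)$, and $\gcd(h,x_{n+1})=1$, and set $L:=x_{n+1}I+hR$. If $(x_1,\ldots,x_n)\in\mathrm{Ass}(R/I^t)$ for some $t\geq1$, then $\mathfrak{m}\in\mathrm{Ass}(R/L^{t+1})$.
   Context: $\mathcal{G}(I)$ denotes the unique minimal set of monomial generators of a monomial ideal $I$. *)

From HB Require Import structures.
From mathcomp Require Import all_boot all_algebra.
From mathcomp Require Import mpoly.
Set Implicit Arguments. Unset Strict Implicit. Unset Printing Implicit Defensive.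
Import GRing.Theory.
Local Open Scope ring_scope.

Section Ideals.
Variables (K : fieldType) (k : nat).
Local Notation R := {mpoly K[k]}.

Definition pideal := R -> Prop.

Definition gen_ideal (S : pideal) : pideal :=
  fun p => exists (cs : seq (R * R)),
    (forall c, c \in cs -> S c.2) /\ p = \sum_(c <- cs) c.1 * c.2.

Definition ideal_eq (I J : pideal) := forall p, I p <-> J p.

Definition monomial_ideal (I : pideal) :=
  exists M : 'X_{1..k} -> Prop,
    ideal_eq I (gen_ideal (fun p => exists2 m, M m & p = 'X_[m])).

(* G(I): monomials of I that are minimal w.r.t. divisibility among monomials of I.
   (for a monomial ideal this is the unique minimal monomial generating set) *)
Definition mingens (I : pideal) (m : 'X_{1..k}) : Prop :=
  I 'X_[m] /\ forall m' : 'X_{1..k}, I 'X_[m'] -> lem m' m -> m' = m.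

Definition ideal_mul (I J : pideal) : pideal :=
  gen_ideal (fun p => exists a b, [/\ I a, J b & p = a * b]).

Fixpoint ideal_pow (I : pideal) (t : nat) : pideal :=
  match t with
  | 0 => gen_ideal (fun p => p = 1)
  | t'.+1 => ideal_mul (ideal_pow I t') I
  end.

Definition ideal_add (I J : pideal) : pideal :=
  gen_ideal (fun p => I p \/ J p).

Definition principal (h : R) : pideal := gen_ideal (fun p => p = h).

Definition prime_ideal (P : pideal) :=
  [/\ (forall a b, P a -> P b -> P (a + b)),
      (forall a b, P b -> P (a * b)),
      P 0, ~ P 1 &
      (forall a b, P (a * b) -> P a \/ P b)].

(* P \in Ass(R/J): P is prime and P = (J : f) = Ann_R(f + J) for some f in R. *)
Definition Ass_quot (J P : pideal) :=
  prime_ideal P /\ exists f : R, forall p, P p <-> J (p * f).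

Definition var_ideal (A : pred 'I_k) : pideal :=
  gen_ideal (fun p => exists2 i, A i & p = 'X_i).

End Ideals.

From HB Require Import structures.
From mathcomp Require Import all_boot all_algebra.
From mathcomp Require Import mpoly.
From Stdlib Require Import Classical.
From mathcomp Require Import zify.
Import GRing.Theory.
Local Open Scope ring_scope.
Set Implicit Arguments. Unset Strict Implicit. Unset Printing Implicit Defensive.

(* All ideals involved are monomial, so each one is the set of polynomials
   supported on an upward-closed set of exponents, and products and powers of
   ideals correspond to sums of these sets.  Since x_{n+1} divides no minimal
   generator of I, clearing the x_{n+1}-exponent preserves I and its powers, so
   the associated prime (x_1,...,x_n) of I^t is witnessed by a monomial u free
   of x_{n+1} with u \notin I^t and x_i u \in I^t for i <= n.  Then
   w = x_{n+1}^t u h witnesses m for L^{t+1}: x_i w \in (x_{n+1} I)^t h for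
   i <= n, and x_{n+1} w \in (x_{n+1} I)^{t+1} because u h = (x_{i0} u) g f/x_{i0}
   lies in I^{t+1} for any x_{i0} dividing f.  Conversely, if w \in L^{t+1}
   then j factors from x_{n+1} I and t+1-j copies of h divide w; comparing
   x_{n+1}-degrees gives j <= t, and clearing x_{n+1} puts u in I^j h^{t-j},
   inside I^t. *)

Section MonomialIdeals.
Variables (K : fieldType) (k : nat).
Local Notation MN := 'X_{1..k}.
Implicit Types (S I J : pideal K k) (D : MN -> Prop) (m : MN).

Definition is_ideal J :=
  [/\ J 0, forall a b, J a -> J b -> J (a + b) & forall r a, J a -> J (r * a)].

Lemma mem_gen_ideal S s : S s -> gen_ideal S s.
Proof.
move=> Ss; exists [:: (1, s)]; rewrite big_seq1 mul1r.
by split=> // c; rewrite inE => /eqP ->.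
Qed.

Lemma gen_ideal_is_ideal S : is_ideal (gen_ideal S).
Proof.
split.
- by exists [::]; rewrite big_nil.
- move=> _ _ [cs [Scs ->]] [ds [Sds ->]]; exists (cs ++ ds); rewrite big_cat.
  by split=> // c; rewrite mem_cat => /orP [/Scs|/Sds].
- move=> r _ [cs [Scs ->]]; exists [seq (r * c.1, c.2) | c <- cs]; split.
    by move=> _ /mapP [c /Scs Sc ->].
  by rewrite big_map big_distrr /=; apply: eq_bigr => c _; rewrite mulrA.
Qed.

Lemma gen_ideal_min S J : is_ideal J -> (forall s, S s -> J s) ->
  forall p, gen_ideal S p -> J p.
Proof.
move=> [J0 JD JM] SJ _ [cs [Scs ->]]; elim: cs Scs => [|c cs IH] Scs.
  by rewrite big_nil.
rewrite big_cons; apply: JD; first by apply/JM/SJ/Scs; rewrite mem_head.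
by apply: IH => c' cs_c'; apply: Scs; rewrite inE cs_c' orbT.
Qed.

Lemma ideal_eq_is_ideal I J : ideal_eq I J -> is_ideal J -> is_ideal I.
Proof.
move=> IJ [J0 JD JM]; split; first exact/IJ.
- by move=> a b /IJ Ja /IJ Jb; apply/IJ/JD.
- by move=> r a /IJ Ja; apply/IJ/JM.
Qed.

Lemma gen_idealX_le S a m : S 'X_[a] -> (a <= m)%MM -> gen_ideal S 'X_[m].
Proof.
move=> Sa le_am; rewrite -(submK le_am) mpolyXD.
by have [_ _ JM] := gen_ideal_is_ideal S; apply/JM/mem_gen_ideal.
Qed.

Definition is_upset D := forall m m', D m -> (m <= m')%MM -> D m'.

(* Every monomial ideal is [supp_ideal D], with [D] its upset of exponents. *)
Definition supp_ideal D : pideal K k := fun p => forall m, ~ D m -> p@_m = 0.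

Definition upset_mul D1 D2 m := exists a b, [/\ D1 a, D2 b & (a + b <= m)%MM].

Fixpoint upset_pow D t : MN -> Prop :=
  if t is t'.+1 then upset_mul (upset_pow D t') D else fun _ => True.

Lemma is_upset_mul D1 D2 : is_upset (upset_mul D1 D2).
Proof.
move=> m m' [a [b [D1a D2b le_abm]]] le_mm'.
by exists a, b; split=> //; apply: lepm_trans le_abm le_mm'.
Qed.

Lemma is_upset_pow D t : is_upset (upset_pow D t).
Proof. by case: t => [|t] //; apply: is_upset_mul. Qed.

Lemma upset_pow_addn D j l a b :
  upset_pow D j a -> D b -> upset_pow D (j + l) (a + b *+ l).
Proof.
move=> Pa Db; elim: l => [|l IH]; first by rewrite addn0 mulm0n addm0.
rewrite addnS mulmSr addmA; exists (a + b *+ l)%MM, b; split=> //.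
exact: lepm_refl.
Qed.

Lemma supp_ideal_sub D1 D2 p :
  (forall m, D1 m -> D2 m) -> supp_ideal D1 p -> supp_ideal D2 p.
Proof. by move=> D12 p1 m D2m; apply: p1 => /D12. Qed.

Lemma supp_idealM D1 D2 p q :
  supp_ideal D1 p -> supp_ideal D2 q -> supp_ideal (upset_mul D1 D2) (p * q).
Proof.
move=> p1 q2 m notDm; rewrite mcoeffM big1 // => ab /eqP eq_abm.
have [D1a|/p1 ->] := classic (D1 ab.1); last by rewrite mul0r.
have [D2b|/q2 ->] := classic (D2 ab.2); last by rewrite mulr0.
by case: notDm; exists ab.1, ab.2; rewrite -eq_abm lepm_refl.
Qed.

Lemma supp_idealX D a : D a -> supp_ideal D 'X_[a].
Proof. by move=> Da m notDm; rewrite mcoeffX; case: eqP => // eq_am; subst. Qed.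

Lemma supp_ideal_is_ideal D : is_upset D -> is_ideal (supp_ideal D).
Proof.
move=> D_up; split.
- by move=> m _; rewrite mcoeff0.
- by move=> a b Da Db m notDm; rewrite mcoeffD Da // Db // addr0.
- move=> r a Da; apply: supp_ideal_sub (supp_idealM (D1 := fun _ => True) _ Da) => //.
  by move=> m [b [c [_ Dc le_bcm]]]; apply: D_up Dc (lepm_trans (lem_addl _ _) le_bcm).
Qed.

Lemma supp_ideal_min D J : is_ideal J -> (forall m, D m -> J 'X_[m]) ->
  forall p, supp_ideal D p -> J p.
Proof.
move=> [J0 JD JM] DJ p pD; rewrite (mpolyE p) big_seq.
apply: (big_ind J) => // m; rewrite mcoeff_msupp -mul_mpolyC => pm_neq0.
apply: JM; apply: DJ; apply: NNPP => notDm.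
by move: pm_neq0; rewrite pD ?eqxx.
Qed.

Lemma gen_ideal_supp S D : is_upset D -> (forall s, S s -> supp_ideal D s) ->
  (forall m, D m -> gen_ideal S 'X_[m]) -> ideal_eq (gen_ideal S) (supp_ideal D).
Proof.
move=> D_up SD DS p; split.
- exact: gen_ideal_min (supp_ideal_is_ideal D_up) SD p.
- exact: supp_ideal_min (gen_ideal_is_ideal S) DS p.
Qed.

Lemma ideal_mul_supp I J DI DJ : is_upset DI -> is_upset DJ ->
  ideal_eq I (supp_ideal DI) -> ideal_eq J (supp_ideal DJ) ->
  ideal_eq (ideal_mul I J) (supp_ideal (upset_mul DI DJ)).
Proof.
move=> DI_up DJ_up I_supp J_supp; apply: gen_ideal_supp (@is_upset_mul _ _) _ _.
- by move=> _ [a [b [/I_supp Ia /J_supp Jb ->]]]; apply: supp_idealM.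
- move=> m [a [b [DIa DJb le_abm]]]; apply: gen_idealX_le le_abm.
  by exists 'X_[a], 'X_[b]; rewrite mpolyXD; split=> //;
    [apply/I_supp | apply/J_supp]; apply: supp_idealX.
Qed.

Lemma ideal_pow_supp I D : is_upset D -> ideal_eq I (supp_ideal D) ->
  forall t, ideal_eq (ideal_pow I t) (supp_ideal (upset_pow D t)).
Proof.
move=> D_up I_supp; elim=> [|t IH] /=; last first.
  exact: ideal_mul_supp (@is_upset_pow D t) D_up IH I_supp.
apply: gen_ideal_supp => // [s _ m []//|m _].
apply: (@gen_idealX_le _ 0%MM); rewrite ?mpolyX0 //.
by apply/mnm_lepP => i; rewrite mnm0E.
Qed.

Lemma monomial_ideal_supp I : monomial_ideal I ->
  is_upset (fun m => I 'X_[m]) /\ ideal_eq I (supp_ideal (fun m => I 'X_[m])).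
Proof.
move=> [M I_gen]; have [I0 ID IM] := ideal_eq_is_ideal I_gen (gen_ideal_is_ideal _).
have I_up : is_upset (fun m => I 'X_[m]).
  by move=> m m' Im le_mm'; rewrite -(submK le_mm') mpolyXD; apply: IM.
split=> // p; split; last exact: supp_ideal_min (And3 I0 ID IM) (fun m Im => Im) p.
move/I_gen; apply: gen_ideal_min (supp_ideal_is_ideal I_up) _ p.
by move=> _ [m Mm ->]; apply/supp_idealX/I_gen/mem_gen_ideal; exists m.
Qed.

Lemma mingens_below I m : I 'X_[m] -> exists2 u, mingens I u & (u <= m)%MM.
Proof.
have [N] := ubnP (mdeg m); elim: N m => // N IH m lt_mN Im.
have [[m' [Im' le_m'm ne_m'm]]|minm] :=
  classic (exists m', [/\ I 'X_[m'], (m' <= m)%MM & m' != m]); last first.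
  exists m; last exact: lepm_refl.
  split=> // m' Im' le_m'm; case: (eqVneq m' m) => // ne_m'm.
  by case: minm; exists m'.
have lt_m'N : (mdeg m' < N)%N.
  have : mdeg (m - m') != 0%N.
    by rewrite mdeg_eq0; apply: contraNneq ne_m'm => d0; rewrite -(submK le_m'm) d0 add0m.
  by rewrite -(submK le_m'm) mdegD in lt_mN; lia.
have [u minu le_um'] := IH m' lt_m'N Im'.
by exists u => //; apply: lepm_trans le_um' le_m'm.
Qed.

Lemma var_ideal_supp (A : pred 'I_k) :
  ideal_eq (var_ideal (K:=K) A) (supp_ideal (fun m => exists2 i, A i & (0 < m i)%N)).
Proof.
apply: gen_ideal_supp.
- by move=> m m' [i Ai mi_gt0] /mnm_lepP le_mm'; exists i => //; have := le_mm' i; lia.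
- by move=> _ [i Ai ->]; apply: supp_idealX; exists i; rewrite ?mnm1E ?eqxx.
- move=> m [i Ai mi_gt0]; apply: (@gen_idealX_le _ U_(i)%MM); first by exists i.
  by apply/mnm_lepP => j; rewrite mnm1E; case: eqP => [<-|].
Qed.

Lemma var_ideal_all p : var_ideal (K:=K) (fun _ : 'I_k => true) p <-> p@_0 = 0.
Proof.
split=> [/var_ideal_supp p0|p0]; first by apply: p0 => -[i _]; rewrite mnm0E.
apply/var_ideal_supp => m m_notin; suff -> : m = 0%MM by [].
apply/mnmP => i; rewrite mnm0E; case: (posnP (m i)) => // mi_gt0.
by case: m_notin; exists i.
Qed.

Lemma var_ideal_all_prime : prime_ideal (var_ideal (K:=K) (fun _ : 'I_k => true)).
Proof.
have mcoeff0M (p q : {mpoly K[k]}) : (p * q)@_0 = p@_0 * q@_0.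
  exact: (mcoeff0_is_multiplicative _ _).1.
split.
- move=> a b /var_ideal_all a0 /var_ideal_all b0.
  by apply/var_ideal_all; rewrite mcoeffD a0 b0 addr0.
- by move=> a b /var_ideal_all b0; apply/var_ideal_all; rewrite mcoeff0M b0 mulr0.
- by apply/var_ideal_all; rewrite mcoeff0.
- by move/var_ideal_all/eqP; rewrite mcoeff1 eqxx oner_eq0.
- move=> a b /var_ideal_all /eqP; rewrite mcoeff0M mulf_eq0.
  by case/orP => /eqP ?; [left | right]; apply/var_ideal_all.
Qed.

(* A monomial [m] of a witness [w] that escapes [J] stays a witness, since
   [x_i w \in J] forces [x_i m \in J] coefficientwise. *)
Lemma ass_monomial_witness J D (A : pred 'I_k) :
  ideal_eq J (supp_ideal D) -> Ass_quot J (var_ideal (K:=K) A) ->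
  exists2 m, ~ D m & forall i, A i -> D (U_(i) + m)%MM.
Proof.
move=> J_supp [[_ _ _ P1 _] [w Pw]].
have : ~ supp_ideal D w by move/J_supp => Jw; apply/P1/Pw; rewrite mul1r.
move=> /not_all_ex_not [m w_m]; have [m_notin wm_neq0] := imply_to_and _ _ w_m.
exists m => // i Ai; apply: NNPP => mX_notin; apply: wm_neq0.
have /J_supp/(_ _ mX_notin) : J ('X_i * w) by apply/Pw/mem_gen_ideal; exists i.
by rewrite mulrC mcoeffMX.
Qed.

Lemma ass_var_ideal_all J D m : is_upset D -> ideal_eq J (supp_ideal D) ->
  ~ D m -> (forall i, D (U_(i) + m)%MM) -> Ass_quot J (var_ideal (K:=K) (fun _ => true)).
Proof.
move=> D_up J_supp m_notin mX_in; split; first exact: var_ideal_all_prime.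
have [J0 JD JM] := ideal_eq_is_ideal J_supp (supp_ideal_is_ideal D_up).
exists 'X_[m] => p; split.
- apply: (@gen_ideal_min _ (fun q => J (q * 'X_[m]))); first split.
  + by rewrite mul0r.
  + by move=> a b Ja Jb; rewrite mulrDl; apply: JD.
  + by move=> r a Ja; rewrite -mulrA; apply: JM.
  + by move=> _ [i _ ->]; apply/J_supp; rewrite -mpolyXD; apply: supp_idealX.
- move/J_supp/(_ m m_notin); rewrite -{1}[m]addm0 mcoeffMX => p0.
  exact/var_ideal_all.
Qed.

End MonomialIdeals.

Section LastVariable.
Variables (K : fieldType) (n : nat).
Local Notation MN := 'X_{1..n.+1}.
Local Notation xl := (@ord_max n).
Implicit Types (I : pideal K n.+1) (D : MN -> Prop) (m u : MN).

Lemma ltn_ord_max (i : 'I_n.+1) : (i < n)%N = (i != xl).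
Proof. by rewrite ltn_neqAle -ltnS ltn_ord andbT -(inj_eq val_inj). Qed.

Definition clear_last m : MN := [multinom if i == xl then 0%N else m i | i < n.+1].

Lemma clear_last_le m : (clear_last m <= m)%MM.
Proof. by apply/mnm_lepP => i; rewrite mnmE; case: ifP. Qed.

Lemma clear_last_addU i m : i != xl -> clear_last (U_(i) + m) = (U_(i) + clear_last m)%MM.
Proof.
move=> i_neq; apply/mnmP => j; rewrite !mnmDE !mnmE ?mnm1E.
by case: (eqVneq j xl) => [->|]; rewrite ?(negbTE i_neq).
Qed.

Lemma upset_pow_clear_last D : (forall m, D m -> D (clear_last m)) ->
  forall j a, upset_pow D j a -> upset_pow D j (clear_last a).
Proof.
move=> D_clear; elim=> [|j IH] a //= [b [c [Pb Dc le_bca]]].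
exists (clear_last b), (clear_last c); split; [exact: IH | exact: D_clear |].
apply/mnm_lepP => i; move/mnm_lepP/(_ i): le_bca.
by rewrite !mnmDE !mnmE; case: ifP.
Qed.

Lemma mingens_clear_last I : is_upset (fun m => I 'X_[m]) ->
  (forall u, mingens I u -> u xl = 0%N) -> forall m, I 'X_[m] -> I 'X_[clear_last m].
Proof.
move=> I_up min_last m /mingens_below [u minu /mnm_lepP le_um].
apply: I_up minu.1 _; apply/mnm_lepP => i; rewrite mnmE.
by case: eqP => [->|_]; rewrite ?min_last.
Qed.

Section PowersOfL.
Variables (DI : MN -> Prop) (h : MN).

(* The exponent set of L = x_{n+1} I + h R, when DI is that of I. *)
Definition Lupset m := upset_mul (fun a => (U_(xl) <= a)%MM) DI m \/ (h <= m)%MM.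

Lemma is_upset_Lupset : is_upset Lupset.
Proof.
move=> m m' [Dm|le_hm] le_mm'; first by left; apply: is_upset_mul Dm le_mm'.
by right; apply: lepm_trans le_hm le_mm'.
Qed.

Lemma Lupset_pow_decomp l m : upset_pow Lupset l m ->
  exists j a, [/\ (j <= l)%N, upset_pow DI j a
                & (a + U_(xl) *+ j + h *+ (l - j) <= m)%MM].
Proof.
elim: l m => [|l IH] m /=.
  move=> _; exists 0%N, 0%MM; rewrite mulm0n !addm0; split=> //.
  by apply/mnm_lepP => i; rewrite mnm0E.
move=> [b [c [/IH [j [a [le_jl Pa /mnm_lepP le_b]]] Lc /mnm_lepP le_bcm]]].
case: Lc => [[c1 [c2 [/mnm_lepP le_c1 DIc2 /mnm_lepP le_c]]] | /mnm_lepP le_hc].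
- exists j.+1, (a + c2)%MM; split=> //; first by exists a, c2; rewrite lepm_refl.
  apply/mnm_lepP => i; move: (le_b i) (le_bcm i) (le_c1 i) (le_c i).
  by rewrite !mnmDE !mulmnE mnm1E; case: (xl == i) => /=; lia.
- exists j, a; split=> //; first exact: leqW.
  apply/mnm_lepP => i; move: (le_b i) (le_bcm i) (le_hc i).
  rewrite !mnmDE !mulmnE subSn //; lia.
Qed.

Lemma Lupset_pow_lastX j a : upset_pow DI j a -> upset_pow Lupset j (a + U_(xl) *+ j).
Proof.
elim: j a => [|j IH] a //= [b [c [Pb DIc /mnm_lepP le_bca]]].
exists (b + U_(xl) *+ j)%MM, (U_(xl) + c)%MM; split; first exact: IH.
  by left; exists U_(xl)%MM, c; rewrite !lepm_refl.
apply/mnm_lepP => i; move: (le_bca i); rewrite !mnmDE !mulmnE mnm1E.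
by case: (xl == i) => /=; lia.
Qed.

(* A product of t+1 generators of L dividing x_{n+1}^t u h has at most t
   factors from x_{n+1} I; clearing x_{n+1} then puts u in I^t. *)
Lemma Lupset_pow_notin t u : u xl = 0%N -> h xl = 0%N -> DI h ->
  (forall m, DI m -> DI (clear_last m)) -> ~ upset_pow DI t u ->
  ~ upset_pow Lupset t.+1 (U_(xl) *+ t + u + h).
Proof.
move=> u_last h_last DIh DI_clear u_notin.
move=> /Lupset_pow_decomp [j [a [_ Pa /mnm_lepP le_a]]].
have le_jt : (j <= t)%N.
  by move: (le_a xl); rewrite !mnmDE !mulmnE mnm1E eqxx u_last h_last; lia.
apply: u_notin; have := upset_pow_addn (t - j) (upset_pow_clear_last DI_clear Pa) DIh.
rewrite subnKC // => P; apply: is_upset_pow P _; apply/mnm_lepP => i.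
move: (le_a i); rewrite !mnmDE !mulmnE mnm1E mnmE subSn // eq_sym.
by case: eqP => [->|_] /=; rewrite ?u_last ?h_last; lia.
Qed.

Lemma Lupset_pow_mulX t u i :
  (forall i, i != xl -> upset_pow DI t (U_(i) + u)) -> upset_pow DI t.+1 (u + h) ->
  upset_pow Lupset t.+1 (U_(i) + (U_(xl) *+ t + u + h)).
Proof.
move=> uX_in uh_in; case: (eqVneq i xl) => [->|i_neq].
  apply: is_upset_pow (Lupset_pow_lastX uh_in) _; apply/mnm_lepP => j.
  by rewrite !mnmDE !mulmnE mnm1E; lia.
exists (U_(i) + u + U_(xl) *+ t)%MM, h; split.
- exact: Lupset_pow_lastX (uX_in i i_neq).
- by right; apply: lepm_refl.
- by apply/mnm_lepP => j; rewrite !mnmDE !mulmnE; lia.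
Qed.

End PowersOfL.

Lemma Lideal_supp I DI h : is_upset DI -> ideal_eq I (supp_ideal DI) ->
  ideal_eq (ideal_add (fun p => exists2 q, I q & p = 'X_xl * q) (principal 'X_[h]))
           (supp_ideal (Lupset DI h)).
Proof.
move=> DI_up I_supp; apply: gen_ideal_supp; first exact: is_upset_Lupset.
- move=> p [[q /I_supp Iq ->]|hp].
    have Xl := supp_idealX K (D := fun a => (U_(xl) <= a)%MM) (lepm_refl _).
    by apply: supp_ideal_sub (supp_idealM Xl Iq) => m; left.
  apply: (supp_ideal_sub (D1 := fun m => (h <= m)%MM)) => [m|]; first by right.
  apply: gen_ideal_min hp; first by apply: supp_ideal_is_ideal => a b; apply: lepm_trans.
  by move=> _ ->; apply/supp_idealX/lepm_refl.
- move=> m [[a [b [le_a DIb le_abm]]] | le_hm].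
    apply: (@gen_idealX_le _ _ _ (U_(xl) + b)%MM).
      by left; exists 'X_[b]; rewrite ?mpolyXD //; apply/I_supp/supp_idealX.
    apply: lepm_trans le_abm; apply/mnm_lepP => i; move/mnm_lepP/(_ i): le_a.
    by rewrite !mnmDE; lia.
  by apply: gen_idealX_le le_hm; right; apply: mem_gen_ideal.
Qed.

End LastVariable.

Unset Implicit Arguments. Set Strict Implicit.

Theorem proposition3p1 (K : fieldType) (n : nat) (I : pideal K n.+1)
    (f g : 'X_{1..n.+1}) (t : nat) :
  monomial_ideal I ->
  (forall u, mingens I u -> u ord_max = 0%N) ->
  f != 0%MM ->
  mingens I g ->
  (f + g)%MM ord_max = 0%N ->
  (1 <= t)%N ->
  Ass_quot (ideal_pow I t) (var_ideal (fun i : 'I_n.+1 => (i < n)%N)) ->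
  Ass_quot
    (ideal_pow
       (ideal_add (fun p => exists2 q, I q & p = 'X_ord_max * q)
                  (principal ('X_[f] * 'X_[g])))
       t.+1)
    (var_ideal (fun _ : 'I_n.+1 => true)).
Proof.
(* [1 <= t] follows from the associated-prime hypothesis, since [I^0 = R]. *)
move=> monI min_last f_neq0 g_min fg_last _ assI.
have [I_up I_supp] := monomial_ideal_supp monI.
set DI := fun m => I 'X_[m] in I_up I_supp.
have DI_clear := mingens_clear_last I_up min_last.
have [m m_notin mX_in] :=
  ass_monomial_witness (ideal_pow_supp I_up I_supp t) assI.
set u := clear_last m.
have u_last : u ord_max = 0%N by rewrite mnmE eqxx.
have u_notin : ~ upset_pow DI t u.
  by move=> Pu; apply: m_notin (is_upset_pow Pu (clear_last_le m)).
have uX_in i : i != ord_max -> upset_pow DI t (U_(i) + u)%MM.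
  move=> i_neq; rewrite -clear_last_addU //.
  by apply: upset_pow_clear_last DI_clear _ _ _; apply: mX_in; rewrite ltn_ord_max.
have [i0 f_i0] : exists i0, (0 < f i0)%N.
  apply: NNPP => no_i0; move/eqP: f_neq0; apply; apply/mnmP => i; rewrite mnm0E.
  by case: (posnP (f i)) => // ?; case: no_i0; exists i.
have i0_neq : i0 != ord_max.
  by apply: contraTneq f_i0 => ->; move: fg_last; rewrite mnmDE; lia.
have uh_in : upset_pow DI t.+1 (u + (f + g))%MM.
  exists (U_(i0) + u)%MM, g; split; [exact: uX_in | exact: g_min.1 |].
  apply/mnm_lepP => j; rewrite !mnmDE mnm1E; case: eqP => [<-|] /=; lia.
rewrite -mpolyXD.
have L_supp := ideal_pow_supp (@is_upset_Lupset _ DI (f + g))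
  (Lideal_supp (f + g) I_up I_supp) t.+1.
apply: (ass_var_ideal_all (@is_upset_pow _ _ t.+1) L_supp).
- have DIh : DI (f + g)%MM := I_up _ _ g_min.1 (lem_addl f g).
  exact: Lupset_pow_notin u_last fg_last DIh DI_clear u_notin.
- by move=> i; apply: Lupset_pow_mulX.
Qed.
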